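(* The following contraction rules are height-preserving admissible in $\mathsf{G}(\mathbf{KT}^+_D)$: for all finite multisets $\Gamma,\Delta$ of formulas, every finite multiset $\Sigma$ of outmost-boxed formulas, every formula $A$, every $G\in\mathsf{Grp}$ and every $n$: if $\Sigma\mid\Gamma\Rightarrow\Delta,A,A$ has a derivation of height at most $n$ then so does $\Sigma\mid\Gamma\Rightarrow\Delta,A$; if $\Sigma\mid A,A,\Gamma\Rightarrow\Delta$ has a derivation of height at most $n$ then so does $\Sigma\mid A,\Gamma\Rightarrow\Delta$; and if $\Sigma,D_GA,D_GA\mid\Gamma\Rightarrow\Delta$ has a derivation of height at most $n$ then so does $\Sigma,D_GA\mid\Gamma\Rightarrow\Delta$.
   Context: Language: fix a finite nonempty set $\mathsf{Agt}$ of agents and a countable set $\mathsf{Prop}$ of propositional variables; $\mathsf{Grp}$ is the set of nonempty subsets of $\mathsf{Agt}$. Formulas: $\alpha::=p\mid\bot\mid\alpha\wedge\alpha\mid\alpha\vee\alpha\mid\alpha\rightarrow\alpha\mid\neg\alpha\mid D_G\alpha$ ($p\in\mathsf{Prop}$, $G\in\mathsf{Grp}$). Outmost-boxed formula: one of the form $D_G\gamma$. Calculus $\mathsf{G}(\mathbf{KT}^+_D)$ (a derivation is a finite tree built from initial sequents by the rules; its height is the maximum length of a branch from the end sequent to an initial sequent): a T-sequent $\Sigma\mid\Gamma\Rightarrow\Delta$ consists of finite multisets $\Gamma,\Delta$ of formulas and a finite multiset $\Sigma$ of outmost-boxed formulas. Initial sequents: $\Sigma\mid\Gamma,p\Rightarrow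 p,\Delta$ ($p\in\mathsf{Prop}$) and $\Sigma\mid\bot,\Gamma\Rightarrow\Delta$. Propositional rules (with $\Sigma$ unchanged): $(R\wedge)$ from $\Sigma\mid\Gamma\Rightarrow\Delta,\alpha_1$ and $\Sigma\mid\Gamma\Rightarrow\Delta,\alpha_2$ infer $\Sigma\mid\Gamma\Rightarrow\Delta,\alpha_1\wedge\alpha_2$; $(L\wedge)$ from $\Sigma\mid\alpha_1,\alpha_2,\Gamma\Rightarrow\Delta$ infer $\Sigma\mid\alpha_1\wedge\alpha_2,\Gamma\Rightarrow\Delta$; $(R\vee)$ from $\Sigma\mid\Gamma\Rightarrow\Delta,\alpha_1,\alpha_2$ infer $\Sigma\mid\Gamma\Rightarrow\Delta,\alpha_1\vee\alpha_2$; $(L\vee)$ from $\Sigma\mid\alpha_1,\Gamma\Rightarrow\Delta$ and $\Sigma\mid\alpha_2,\Gamma\Rightarrow\Delta$ infer $\Sigma\mid\alpha_1\vee\alpha_2,\Gamma\Rightarrow\Delta$; $(R\rightarrow)$ from $\Sigma\mid\alpha_1,\Gamma\Rightarrow\Delta,\alpha_2$ infer $\Sigma\mid\Gamma\Rightarrow\Delta,\alpha_1\rightarrow\alpha_2$; $(L\rightarrow)$ from $\Sigma\mid\Gamma\Rightarrow\Delta,\alpha_1$ and $\Sigma\mid\alpha_2,\Gamma\Rightarrow\Delta$ infer $\Sigma\mid\alpha_1\rightarrow\alpha_2,\Gamma\Rightarrow\Delta$; $(R\neg)$ from $\Sigma\mid\alpha,\Gamma\Rightarrow\Delta$ infer $\Sigma\mid\Gamma\Rightarrow\Delta,\neg\alpha$;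 $(L\neg)$ from $\Sigma\mid\Gamma\Rightarrow\Delta,\alpha$ infer $\Sigma\mid\neg\alpha,\Gamma\Rightarrow\Delta$. Modal rules: $(D_K^+)$: from $\emptyset\mid\alpha_1,\dots,\alpha_n\Rightarrow\beta$ ($n\ge0$) infer $\Sigma,D_{G_1}\alpha_1,\dots,D_{G_n}\alpha_n\mid\Pi\Rightarrow D_G\beta,\Omega$, provided $G_i\subseteq G$ for all $i$, $\Sigma$ consists only of formulas $D_H\gamma$ with $H\not\subseteq G$, $\Pi$ only of propositional variables and $\bot$, and $\Omega$ only of propositional variables, $\bot$ and outmost-boxed formulas; $(D_T^+)$: from $D_G\alpha,\Sigma\mid\Gamma,\alpha\Rightarrow\Delta$ infer $\Sigma\mid\Gamma,D_G\alpha\Rightarrow\Delta$. *)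

From mathcomp Require Import all_boot.
From Stdlib Require Import List Permutation.
Import ListNotations.

Set Implicit Arguments.
Unset Strict Implicit.
Unset Printing Implicit Defensive.

Section Calculus.
Variable Agt : finType.

Definition grp := {G : {set Agt} | G != set0}.

Inductive form : Type :=
| Var : nat -> form
| Bot : form
| And : form -> form -> form
| Or : form -> form -> form
| Imp : form -> form -> form
| Neg : form -> form
| Box : grp -> form -> form.

(* An outmost-boxed formula D_G g is represented by the pair (G, g). *)
Definition boxed := (grp * form)%type.
Definition unbox (b : boxed) : form := Box b.1 b.2.

(* A T-sequent  Sigma | Gamma => Delta ; finite multisets are lists taken up
   to permutation (every rule conclusion is closed under permutation). *)
Record tseq := TSeq { tS : list boxed; tL : list form; tR : list form }.

Definition tperm (s t : tseq) : Prop :=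
  Permutation (tS s) (tS t) /\ Permutation (tL s) (tL t) /\ Permutation (tR s) (tR t).

Definition atom_or_bot (a : form) : Prop :=
  match a with Var _ | Bot => True | _ => False end.
Definition atom_bot_or_boxed (a : form) : Prop :=
  match a with Var _ | Bot | Box _ _ => True | _ => False end.

Inductive deriv : tseq -> Type :=
| Init S G D p s : tperm s (TSeq S (Var p :: G) (Var p :: D)) -> deriv s
| InitBot S G D s : tperm s (TSeq S (Bot :: G) D) -> deriv s
| RAnd S G D a1 a2 s :
    deriv (TSeq S G (a1 :: D)) -> deriv (TSeq S G (a2 :: D)) ->
    tperm s (TSeq S G (And a1 a2 :: D)) -> deriv s
| LAnd S G D a1 a2 s :
    deriv (TSeq S (a1 :: a2 :: G) D) ->
    tperm s (TSeq S (And a1 a2 :: G) D) -> deriv s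
| ROr S G D a1 a2 s :
    deriv (TSeq S G (a1 :: a2 :: D)) ->
    tperm s (TSeq S G (Or a1 a2 :: D)) -> deriv s
| LOr S G D a1 a2 s :
    deriv (TSeq S (a1 :: G) D) -> deriv (TSeq S (a2 :: G) D) ->
    tperm s (TSeq S (Or a1 a2 :: G) D) -> deriv s
| RImp S G D a1 a2 s :
    deriv (TSeq S (a1 :: G) (a2 :: D)) ->
    tperm s (TSeq S G (Imp a1 a2 :: D)) -> deriv s
| LImp S G D a1 a2 s :
    deriv (TSeq S G (a1 :: D)) -> deriv (TSeq S (a2 :: G) D) ->
    tperm s (TSeq S (Imp a1 a2 :: G) D) -> deriv s
| RNeg S G D a s :
    deriv (TSeq S (a :: G) D) ->
    tperm s (TSeq S G (Neg a :: D)) -> deriv s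
| LNeg S G D a s :
    deriv (TSeq S G (a :: D)) ->
    tperm s (TSeq S (Neg a :: G) D) -> deriv s
| DK (S l : list boxed) (Pi Om : list form) (G : grp) (b : form) s :
    deriv (TSeq [] (map snd l) [b]) ->
    Forall (fun p : boxed => val p.1 \subset val G) l ->
    Forall (fun p : boxed => ~~ (val p.1 \subset val G)) S ->
    Forall atom_or_bot Pi ->
    Forall atom_bot_or_boxed Om ->
    tperm s (TSeq (S ++ l) Pi (Box G b :: Om)) -> deriv s
| DT S G D (H : grp) a s :
    deriv (TSeq ((H, a) :: S) (a :: G) D) ->
    tperm s (TSeq S (Box H a :: G) D) -> deriv s.

Fixpoint height (s : tseq) (d : deriv s) : nat :=
  match d with
  | Init _ _ _ _ _ _ | InitBot _ _ _ _ _ => 0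
  | RAnd _ _ _ _ _ _ d1 d2 _ => (maxn (height d1) (height d2)).+1
  | LAnd _ _ _ _ _ _ d1 _ => (height d1).+1
  | ROr _ _ _ _ _ _ d1 _ => (height d1).+1
  | LOr _ _ _ _ _ _ d1 d2 _ => (maxn (height d1) (height d2)).+1
  | RImp _ _ _ _ _ _ d1 _ => (height d1).+1
  | LImp _ _ _ _ _ _ d1 d2 _ => (maxn (height d1) (height d2)).+1
  | RNeg _ _ _ _ _ d1 _ => (height d1).+1
  | LNeg _ _ _ _ _ d1 _ => (height d1).+1
  | DK _ _ _ _ _ _ _ d1 _ _ _ _ _ => (height d1).+1
  | DT _ _ _ _ _ _ d1 _ => (height d1).+1
  end.

Definition derivable_h (n : nat) (s : tseq) : Prop :=
  exists d : deriv s, height d <= n.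

End Calculus.

From mathcomp Require Import all_boot.
From Stdlib Require Import List.
Import ListNotations.
From Stdlib Require Import Permutation Lia.

Set Implicit Arguments.
Unset Strict Implicit.
Unset Printing Implicit Defensive.

(* A T-sequent is treated as the multiset of its items (entries of Sigma, antecedent formulas,
   succedent formulas), so that the three rules become one: a duplicated item can be contracted
   without increasing the height.  Every rule other than (D_K^+) shares its context and is
   height-preserving invertible.  If the duplicated item is not principal in the last rule, contract it in the
   premises.  If it is principal in a context-sharing rule, invert the other copy in each
   premise and contract the duplicated active items so produced, at smaller height.  A
   conclusion of (D_K^+) constrains only which formulas occur in the antecedent and succedent,
   and a duplicated D_H a in Sigma with H included in G duplicates a in the antecedent of the
   premise, where it is contracted at smaller height. *)

Section ListFacts.

(* mathcomp binds [seq_scope] to [list], which would read [++] as [cat] in the arguments of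
   [Permutation] and [In]; the Stdlib list lemmas used below are stated with [app]. *)
Local Bind Scope list_scope with list.

Variable T : Type.
Implicit Types (f : T -> bool) (l : list T).

Lemma Permutation_filter f l l' :
  Permutation l l' -> Permutation (filter f l) (filter f l').
Proof.
elim=> [|x l1 l2 _ IH | x y l1 | l1 l2 l3 _ IH1 _ IH2] //=.
- by case: (f x) => //; apply: perm_skip.
- by case: (f x); case: (f y) => //; apply: perm_swap.
- exact: Permutation_trans IH1 IH2.
Qed.

Lemma Permutation_filter_partition f l :
  Permutation l (filter (fun x => ~~ f x) l ++ filter f l).
Proof.
elim: l => //= x l IH; case: (f x) => /=; first exact: Permutation_cons_app.
exact: perm_skip.
Qed.

Lemma filter_id_Forall f l : Forall (fun x => f x) l -> filter f l = l.
Proof. by elim=> //= x l' -> _ ->. Qed.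

Lemma filter_nil_Forall f l : Forall (fun x => ~~ f x) l -> filter f l = [].
Proof. by elim=> //= x l' fx _ ->; rewrite (negbTE fx). Qed.

Lemma Permutation_app_cons_split (X c c' : list T) j :
  Permutation (X ++ c) (j :: c') -> ~ In j X ->
  exists c1, Permutation c' (X ++ c1) /\ Permutation c (j :: c1).
Proof.
move=> perm jX.
have jXc : In j (X ++ c) by apply: Permutation_in (Permutation_sym perm) (in_eq _ _).
have [//|jc] := in_app_or _ _ _ jXc; have [c2 [c3 ec]] := in_split _ _ jc.
exists (c2 ++ c3); split; last by rewrite ec; apply: Permutation_sym; apply: Permutation_middle.
apply: (@Permutation_cons_inv _ _ _ j); apply: Permutation_trans (Permutation_sym perm) _.
by rewrite ec !app_assoc; apply: Permutation_sym; apply: Permutation_middle.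
Qed.

End ListFacts.

Section Contraction.

Local Bind Scope list_scope with list.

Variable Agt : finType.
Local Notation form := (form Agt).
Local Notation boxed := (boxed Agt).
Local Notation tseq := (tseq Agt).

Lemma tperm_refl (s : tseq) : tperm s s.
Proof. by split; [|split]. Qed.

Lemma tperm_sym (s t : tseq) : tperm s t -> tperm t s.
Proof. by case=> [hS [hL hR]]; split; [|split]; apply: Permutation_sym. Qed.

Lemma tperm_trans (s t u : tseq) : tperm s t -> tperm t u -> tperm s u.
Proof.
by case=> [hS [hL hR]] [kS [kL kR]]; split; [|split]; apply: Permutation_trans; eassumption.
Qed.

Definition deriv_tperm (s t : tseq) (st : tperm s t) (d : deriv s) : deriv t :=
  match d in deriv s0 return tperm s0 t -> deriv t with
  | @Init _ _ _ _ _ _ h => fun st => Init (tperm_trans (tperm_sym st) h)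
  | @InitBot _ _ _ _ _ h => fun st => InitBot (tperm_trans (tperm_sym st) h)
  | @RAnd _ _ _ _ _ _ _ d1 d2 h => fun st => RAnd d1 d2 (tperm_trans (tperm_sym st) h)
  | @LAnd _ _ _ _ _ _ _ d1 h => fun st => LAnd d1 (tperm_trans (tperm_sym st) h)
  | @ROr _ _ _ _ _ _ _ d1 h => fun st => ROr d1 (tperm_trans (tperm_sym st) h)
  | @LOr _ _ _ _ _ _ _ d1 d2 h => fun st => LOr d1 d2 (tperm_trans (tperm_sym st) h)
  | @RImp _ _ _ _ _ _ _ d1 h => fun st => RImp d1 (tperm_trans (tperm_sym st) h)
  | @LImp _ _ _ _ _ _ _ d1 d2 h => fun st => LImp d1 d2 (tperm_trans (tperm_sym st) h)
  | @RNeg _ _ _ _ _ _ d1 h => fun st => RNeg d1 (tperm_trans (tperm_sym st) h)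
  | @LNeg _ _ _ _ _ _ d1 h => fun st => LNeg d1 (tperm_trans (tperm_sym st) h)
  | @DK _ _ _ _ _ _ _ _ d1 f1 f2 f3 f4 h =>
      fun st => DK d1 f1 f2 f3 f4 (tperm_trans (tperm_sym st) h)
  | @DT _ _ _ _ _ _ _ d1 h => fun st => DT d1 (tperm_trans (tperm_sym st) h)
  end st.

Lemma derivable_h_tperm n (s t : tseq) : tperm s t -> derivable_h n s -> derivable_h n t.
Proof. by move=> st [d hd]; exists (deriv_tperm st d); case: d st hd. Qed.

Inductive item := SItem of boxed | LItem of form | RItem of form.

Lemma form_dec (a b : form) : {a = b} + {a <> b}.
Proof. by decide equality; [apply: PeanoNat.Nat.eq_dec | apply: eq_comparable]. Qed.

Lemma item_dec (i j : item) : {i = j} + {i <> j}.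
Proof. by decide equality; try decide equality; first [apply: form_dec | apply: eq_comparable]. Qed.

Ltac perm_solve :=
  let x := fresh "x" in
  apply/(Permutation_count_occ item_dec) => x;
  repeat match goal with H : @Permutation item _ _ |- _ =>
    move: H => /(Permutation_count_occ item_dec)/(_ x) end;
  rewrite ?map_app ?count_occ_app /= ?count_occ_app /= ?count_occ_app;
  repeat case: item_dec => ?; subst; try congruence; lia.

Definition sitem (i : item) : list boxed := if i is SItem b then [b] else [].
Definition litem (i : item) : list form := if i is LItem a then [a] else [].
Definition ritem (i : item) : list form := if i is RItem a then [a] else [].

Definition tseq_of (L : list item) : tseq :=
  TSeq (flat_map sitem L) (flat_map litem L) (flat_map ritem L).

Definition items (s : tseq) : list item :=
  map SItem (tS s) ++ map LItem (tL s) ++ map RItem (tR s).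

Definition plug (p : list item) (s : tseq) : tseq :=
  TSeq (flat_map sitem p ++ tS s) (flat_map litem p ++ tL s) (flat_map ritem p ++ tR s).

Definition derivable n (L : list item) : Prop := derivable_h n (tseq_of L).

Lemma tseq_of_items s : tseq_of (items s) = s.
Proof.
have fm_nil A B (h : A -> item) (g : item -> list B) X :
    (forall x, g (h x) = []) -> flat_map g (map h X) = [].
  by move=> gh; elim: X => //= x X ->; rewrite gh.
have fm_id A (h : A -> item) (g : item -> list A) X :
    (forall x, g (h x) = [x]) -> flat_map g (map h X) = X.
  by move=> gh; elim: X => //= x X ->; rewrite gh.
case: s => S G D; rewrite /tseq_of /items /= !flat_map_app.
rewrite (fm_id _ SItem) // (fm_nil _ _ LItem sitem) // (fm_nil _ _ RItem sitem) //.
rewrite (fm_nil _ _ SItem litem) // (fm_id _ LItem) // (fm_nil _ _ RItem litem) //.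
by rewrite (fm_nil _ _ SItem ritem) // (fm_nil _ _ LItem ritem) // (fm_id _ RItem) // !app_nil_r.
Qed.

Lemma tseq_of_app_items p s : tseq_of (p ++ items s) = plug p s.
Proof. by rewrite -[s in RHS]tseq_of_items /tseq_of /plug /= !flat_map_app. Qed.

Lemma Permutation_items_tseq_of L : Permutation L (items (tseq_of L)).
Proof.
rewrite /items /tseq_of; elim: L => //= -[b|a|a] L IH /=.
- exact: perm_skip.
- exact: Permutation_cons_app.
- by rewrite !app_assoc in IH *; apply: Permutation_cons_app.
Qed.

Lemma Permutation_items s t : tperm s t -> Permutation (items s) (items t).
Proof.
by case=> [hS [hL hR]]; do 2 (apply: Permutation_app; first exact: Permutation_map);
  apply: Permutation_map.
Qed.

Lemma tperm_tseq_of L M : Permutation L M -> tperm (tseq_of L) (tseq_of M).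
Proof. by move=> LM; split; [|split]; apply: Permutation_flat_map. Qed.

Lemma derivable_perm n L M : Permutation L M -> derivable n L -> derivable n M.
Proof. by move/tperm_tseq_of; apply: derivable_h_tperm. Qed.

Lemma derivable_mono m n L : m <= n -> derivable m L -> derivable n L.
Proof. by move=> mn [d hd]; exists d; apply: leq_trans hd mn. Qed.

Lemma derivable_h_items n s : derivable_h n s <-> derivable n (items s).
Proof. by rewrite /derivable tseq_of_items. Qed.

Lemma in_litems L a : In a (flat_map litem L) <-> In (LItem a) L.
Proof.
rewrite in_flat_map; split=> [[i [iL ai]]|iL]; last by exists (LItem a); split; [|left].
by case: i iL ai => //= a' iL [<-|[]].
Qed.

Lemma in_ritems L a : In a (flat_map ritem L) <-> In (RItem a) L.
Proof.
rewrite in_flat_map; split=> [[i [iL ai]]|iL]; last by exists (RItem a); split; [|left].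
by case: i iL ai => //= a' iL [<-|[]].
Qed.

Definition initial (L : list item) : Prop :=
  (exists p, In (LItem (Var Agt p)) L /\ In (RItem (Var Agt p)) L) \/ In (LItem (Bot Agt)) L.

Lemma initial_incl L M : incl L M -> initial L -> initial M.
Proof. by move=> LM [[p [pl pr]]|bl]; [left; exists p; split; apply: LM | right; apply: LM]. Qed.

Lemma derivable_initial n L : initial L -> derivable n L.
Proof.
case=> [[p [/in_litems pl /in_ritems pr]] | /in_litems bl].
- have [G1 [G2 eG]] := in_split _ _ pl; have [D1 [D2 eD]] := in_split _ _ pr.
  have h : tperm (tseq_of L)
      (TSeq (flat_map sitem L) (Var Agt p :: G1 ++ G2) (Var Agt p :: D1 ++ D2)).
    by split; [|split]; rewrite /= ?eG ?eD //; apply: Permutation_sym; apply: Permutation_middle.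
  by exists (Init h).
- have [G1 [G2 eG]] := in_split _ _ bl.
  have h : tperm (tseq_of L) (TSeq (flat_map sitem L) (Bot Agt :: G1 ++ G2) (flat_map ritem L)).
    by split; [|split]; rewrite /= ?eG //; apply: Permutation_sym; apply: Permutation_middle.
  by exists (InitBot h).
Qed.

Definition dk_context_item (i : item) : Prop :=
  match i with SItem _ => True | LItem a => atom_or_bot a | RItem a => atom_bot_or_boxed a end.

Definition dk_conclusion (Gr : grp Agt) (b : form) (L : list item) : Prop :=
  In (RItem (Box Gr b)) L /\ Forall dk_context_item L.

Definition below (Gr : grp Agt) (p : boxed) : bool := val p.1 \subset val Gr.

(* The premise of (D_K^+) is determined by the conclusion: its antecedent lists the a with
   D_H a in Sigma and H included in G; the other entries of Sigma are weakened. *)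
Definition dk_premise (Gr : grp Agt) (b : form) (L : list item) : tseq :=
  TSeq [] (map snd (filter (below Gr) (flat_map sitem L))) [b].

Lemma derivable_DK n Gr b L :
  dk_conclusion Gr b L -> derivable_h n (dk_premise Gr b L) -> derivable n.+1 L.
Proof.
move=> [/in_ritems BL ctx] [d hd]; have [O1 [O2 eO]] := in_split _ _ BL.
have ctxL a : In a (flat_map litem L) -> atom_or_bot a.
  by move/in_litems/(proj1 (Forall_forall _ _) ctx).
have ctxR a : In a (flat_map ritem L) -> atom_bot_or_boxed a.
  by move/in_ritems/(proj1 (Forall_forall _ _) ctx).
have h : tperm (tseq_of L)
    (TSeq (filter (fun p => ~~ below Gr p) (flat_map sitem L) ++
           filter (below Gr) (flat_map sitem L))
       (flat_map litem L) (Box Gr b :: O1 ++ O2)).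
  split; first exact: Permutation_filter_partition; split; first exact: Permutation_refl.
  by rewrite /= eO; apply: Permutation_sym; apply: Permutation_middle.
have fl : Forall (fun p : boxed => below Gr p) (filter (below Gr) (flat_map sitem L)).
  by apply/Forall_forall => p /filter_In[].
have fSg : Forall (fun p : boxed => ~~ below Gr p)
    (filter (fun p => ~~ below Gr p) (flat_map sitem L)).
  by apply/Forall_forall => p /filter_In[].
have fPi : Forall (@atom_or_bot Agt) (flat_map litem L) by apply/Forall_forall.
have fOm : Forall (@atom_bot_or_boxed Agt) (O1 ++ O2).
  apply/Forall_forall => a aO; apply: ctxR; rewrite eO.
  by apply: in_or_app; case: (in_app_or _ _ _ aO); [left | right; right].
by exists (DK d fl fSg fPi fOm h); rewrite /= ltnS.
Qed.

Inductive shared_rule : list (list item) -> item -> Prop :=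
  | sr_RAnd a1 a2 : shared_rule [[RItem a1]; [RItem a2]] (RItem (And a1 a2))
  | sr_LAnd a1 a2 : shared_rule [[LItem a1; LItem a2]] (LItem (And a1 a2))
  | sr_ROr a1 a2 : shared_rule [[RItem a1; RItem a2]] (RItem (Or a1 a2))
  | sr_LOr a1 a2 : shared_rule [[LItem a1]; [LItem a2]] (LItem (Or a1 a2))
  | sr_RImp a1 a2 : shared_rule [[LItem a1; RItem a2]] (RItem (Imp a1 a2))
  | sr_LImp a1 a2 : shared_rule [[RItem a1]; [LItem a2]] (LItem (Imp a1 a2))
  | sr_RNeg a : shared_rule [[LItem a]] (RItem (Neg a))
  | sr_LNeg a : shared_rule [[RItem a]] (LItem (Neg a))
  | sr_DT H a : shared_rule [[SItem (H, a); LItem a]] (LItem (Box H a)).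

Lemma shared_rule_det ps ps' j : shared_rule ps j -> shared_rule ps' j -> ps = ps'.
Proof. by move=> r r'; destruct r; inversion r'. Qed.

Lemma shared_principal_not_dk_context ps j : shared_rule ps j -> ~ dk_context_item j.
Proof. by case=> * []. Qed.

Lemma derivable_shared n ps j c :
  shared_rule ps j -> (forall p, In p ps -> derivable n (p ++ c)) -> derivable n.+1 (j :: c).
Proof.
case=> [a1 a2|a1 a2|a1 a2|a1 a2|a1 a2|a1 a2|a|a|H a] prem;
  have [d1 h1] := prem _ (or_introl erefl);
  try have [d2 h2] := prem _ (or_intror (or_introl erefl)).
- by exists (RAnd d1 d2 (tperm_refl _)); rewrite /= ltnS geq_max h1 h2.
- by exists (LAnd d1 (tperm_refl _)); rewrite /= ltnS.
- by exists (ROr d1 (tperm_refl _)); rewrite /= ltnS.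
- by exists (LOr d1 d2 (tperm_refl _)); rewrite /= ltnS geq_max h1 h2.
- by exists (RImp d1 (tperm_refl _)); rewrite /= ltnS.
- by exists (LImp d1 d2 (tperm_refl _)); rewrite /= ltnS geq_max h1 h2.
- by exists (RNeg d1 (tperm_refl _)); rewrite /= ltnS.
- by exists (LNeg d1 (tperm_refl _)); rewrite /= ltnS.
- by exists (DT d1 (tperm_refl _)); rewrite /= ltnS.
Qed.

Inductive last_rule (n : nat) (L : list item) : Prop :=
  | LastInitial of initial L
  | LastDK m Gr b of n = m.+1 & dk_conclusion Gr b L & derivable_h m (dk_premise Gr b L)
  | LastShared m ps j c of n = m.+1 & shared_rule ps j & Permutation L (j :: c)
      & (forall p, In p ps -> derivable m (p ++ c)).

Lemma last_rule_shared n ps j s L :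
  shared_rule ps j -> tperm (tseq_of L) (plug [j] s) ->
  (forall p, In p ps -> derivable_h n (plug p s)) -> last_rule n.+1 L.
Proof.
move=> r Ls prem; apply: (LastShared (c := items s) erefl r).
- apply: Permutation_trans (Permutation_items_tseq_of L) _.
  apply: Permutation_trans (Permutation_items Ls) _.
  by rewrite -tseq_of_app_items; apply/Permutation_sym/Permutation_items_tseq_of.
- by move=> p /prem; rewrite /derivable tseq_of_app_items.
Qed.

Lemma last_rule_DK n Sg l Pi Om Gr b L :
  derivable_h n (TSeq [] (map snd l) [b]) ->
  Forall (fun p : boxed => below Gr p) l -> Forall (fun p : boxed => ~~ below Gr p) Sg ->
  Forall (@atom_or_bot Agt) Pi -> Forall (@atom_bot_or_boxed Agt) Om ->
  tperm (tseq_of L) (TSeq (Sg ++ l) Pi (Box Gr b :: Om)) -> last_rule n.+1 L.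
Proof.
move=> prem fl fSg fPi fOm [/= hS [/= hL /= hR]]; apply: (LastDK erefl).
- split; first by apply/in_ritems; apply: Permutation_in (Permutation_sym hR) (in_eq _ _).
  apply/Forall_forall => -[p|a|a] //=.
  + by move/in_litems/(Permutation_in _ hL); apply: (proj1 (Forall_forall _ _) fPi).
  + move/in_ritems/(Permutation_in _ hR) => [<-//|].
    exact: (proj1 (Forall_forall _ _) fOm).
- apply: derivable_h_tperm prem; split; first exact: Permutation_refl.
  split; last exact: Permutation_refl.
  apply/Permutation_map/Permutation_sym; apply: Permutation_trans (Permutation_filter _ hS) _.
  by rewrite filter_app filter_nil_Forall // filter_id_Forall.
Qed.

Lemma derivable_last_rule n L : derivable n L -> last_rule n L.
Proof.
case=> d; move eL: (tseq_of L) d => t d hd.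
destruct d as [S G D p s h|S G D s h|S G D a1 a2 s d1 d2 h|S G D a1 a2 s d1 h
  |S G D a1 a2 s d1 h|S G D a1 a2 s d1 d2 h|S G D a1 a2 s d1 h|S G D a1 a2 s d1 d2 h
  |S G D a s d1 h|S G D a s d1 h|Sg l Pi Om Gr b s d1 fl fSg fPi fOm h|S G D H a s d1 h];
  subst s.
1,2: clear hd; apply: LastInitial; case: h => _ [/= hL hR].
- left; exists p; split; [apply/in_litems | apply/in_ritems].
  + exact: Permutation_in (Permutation_sym hL) (in_eq _ _).
  + exact: Permutation_in (Permutation_sym hR) (in_eq _ _).
- by right; apply/in_litems; apply: Permutation_in (Permutation_sym hL) (in_eq _ _).
all: case: n hd => [|m] //=; rewrite ltnS ?geq_max => hd.
- apply: (last_rule_shared (s := TSeq S G D) (sr_RAnd a1 a2) h).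
  by case/andP: hd => ? ? _ [<-|[<-|[]]]; [exists d1 | exists d2].
- by apply: (last_rule_shared (s := TSeq S G D) (sr_LAnd a1 a2) h) => _ [<-|[]]; exists d1.
- by apply: (last_rule_shared (s := TSeq S G D) (sr_ROr a1 a2) h) => _ [<-|[]]; exists d1.
- apply: (last_rule_shared (s := TSeq S G D) (sr_LOr a1 a2) h).
  by case/andP: hd => ? ? _ [<-|[<-|[]]]; [exists d1 | exists d2].
- by apply: (last_rule_shared (s := TSeq S G D) (sr_RImp a1 a2) h) => _ [<-|[]]; exists d1.
- apply: (last_rule_shared (s := TSeq S G D) (sr_LImp a1 a2) h).
  by case/andP: hd => ? ? _ [<-|[<-|[]]]; [exists d1 | exists d2].
- by apply: (last_rule_shared (s := TSeq S G D) (sr_RNeg a) h) => _ [<-|[]]; exists d1.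
- by apply: (last_rule_shared (s := TSeq S G D) (sr_LNeg a) h) => _ [<-|[]]; exists d1.
- exact: last_rule_DK (ex_intro _ d1 hd) fl fSg fPi fOm h.
- by apply: (last_rule_shared (s := TSeq S G D) (sr_DT H a) h) => _ [<-|[]]; exists d1.
Qed.

Definition hp_admissible n (X Y : list item) : Prop :=
  forall c, derivable n (X ++ c) -> derivable n (Y ++ c).

Lemma derivable_shared_nonprincipal m ps j X Y c c' :
  hp_admissible m X Y -> shared_rule ps j -> ~ In j X ->
  Permutation (X ++ c) (j :: c') -> (forall p, In p ps -> derivable m (p ++ c')) ->
  derivable m.+1 (Y ++ c).
Proof.
move=> XY r jX perm prem; have [c1 [ec' ec]] := Permutation_app_cons_split perm jX.
apply: derivable_perm (derivable_shared (c := Y ++ c1) r _); first by perm_solve.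
move=> p /prem dp; apply: derivable_perm (XY (p ++ c1) _); first by perm_solve.
by apply: derivable_perm dp; perm_solve.
Qed.

Lemma initial_cons_inv j c : ~ dk_context_item j -> initial (j :: c) -> initial c.
Proof.
move=> nj [[p [[ej|pl] [ej'|pr]]]|[ej|bl]]; try by subst j; exfalso; apply: nj.
- by left; exists p.
- by right.
Qed.

Lemma shared_rule_invertible n ps j p : shared_rule ps j -> In p ps -> hp_admissible n [j] p.
Proof.
move=> r pin; elim/ltn_ind: n => n IH c /derivable_last_rule[].
- move/(initial_cons_inv (shared_principal_not_dk_context r)) => init.
  by apply: derivable_initial; apply: initial_incl init; apply: incl_appr; apply: incl_refl.
- by move=> m Gr b _ [_ ctx]; case: (shared_principal_not_dk_context r (Forall_inv ctx)).
- move=> m ps' j' c' en r' perm prem; subst n.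
  case: (item_dec j j') => [ej | nj]; last first.
    apply: derivable_shared_nonprincipal (IH m (ltnSn m)) r' _ perm prem.
    by case=> [ej|[]]; apply: nj.
  subst j'; rewrite (shared_rule_det r' r) in prem.
  apply: derivable_mono (leqnSn m) _; apply: derivable_perm (prem p pin).
  by apply: Permutation_app_head; apply: Permutation_sym; apply: Permutation_cons_inv perm.
Qed.

Lemma derivable_contract_app n p c :
  (forall i, hp_admissible n [i; i] [i]) -> derivable n (p ++ p ++ c) -> derivable n (p ++ c).
Proof.
move=> contr; elim: p c => // i p IH c d.
have d1 : derivable n ([i; i] ++ p ++ p ++ c) by apply: derivable_perm d; perm_solve.
have d2 : derivable n (p ++ p ++ i :: c) by apply: derivable_perm (contr _ _ d1); perm_solve.
by apply: derivable_perm (IH _ d2); perm_solve.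
Qed.

Lemma derivable_dk_premise_contract m Gr b i c :
  (forall i, hp_admissible m [i; i] [i]) ->
  derivable_h m (dk_premise Gr b (i :: i :: c)) -> derivable_h m (dk_premise Gr b (i :: c)).
Proof.
move=> contr /derivable_h_items d; apply/derivable_h_items.
move: d; rewrite /dk_premise /items /= !filter_app !map_app -!app_assoc.
exact: derivable_contract_app.
Qed.

Lemma contraction n i : hp_admissible n [i; i] [i].
Proof.
elim/ltn_ind: n i => n IH i c /derivable_last_rule[].
- move=> init; apply: derivable_initial; apply: initial_incl init.
  by move=> x [<-|[<-|xc]]; [left | left | right].
- move=> m Gr b en [iB ctx] prem; subst n.
  apply: derivable_DK (derivable_dk_premise_contract (IH m (ltnSn m)) prem).
  split; last exact: Forall_inv_tail ctx.
  by case: iB => [<-|//]; left.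
- move=> m ps j c' en r perm prem; subst n.
  case: (item_dec i j) => [eij | nij]; last first.
    apply: derivable_shared_nonprincipal (IH m (ltnSn m) i) r _ perm prem.
    by case=> [eij|[eij|[]]]; apply: nij.
  subst j; apply: (derivable_shared r) => p pin.
  have ec : Permutation c' (i :: c) by apply: Permutation_sym; apply: Permutation_cons_inv perm.
  have dp : derivable m ([i] ++ p ++ c) by apply: derivable_perm (prem p pin); perm_solve.
  exact: derivable_contract_app (IH m (ltnSn m)) (shared_rule_invertible r pin dp).
Qed.

Lemma derivable_h_contract n i c s t :
  Permutation (items s) (i :: i :: c) -> Permutation (items t) (i :: c) ->
  derivable_h n s -> derivable_h n t.
Proof.
move=> si ti /derivable_h_items ds; apply/derivable_h_items.
exact: derivable_perm (Permutation_sym ti) (contraction (derivable_perm si ds)).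
Qed.

Lemma contraction_right n (S : list boxed) (G D : list form) (A : form) :
  derivable_h n (TSeq S G (D ++ [A; A])) -> derivable_h n (TSeq S G (D ++ [A])).
Proof.
apply: (derivable_h_contract (i := RItem A) (c := items (TSeq S G D)));
  by rewrite /items; perm_solve.
Qed.

Lemma contraction_left n (S : list boxed) (G D : list form) (A : form) :
  derivable_h n (TSeq S (A :: A :: G) D) -> derivable_h n (TSeq S (A :: G) D).
Proof.
apply: (derivable_h_contract (i := LItem A) (c := items (TSeq S G D)));
  by rewrite /items; perm_solve.
Qed.

Lemma contraction_boxed n (S : list boxed) (G D : list form) (B : boxed) :
  derivable_h n (TSeq (S ++ [B; B]) G D) -> derivable_h n (TSeq (S ++ [B]) G D).
Proof.
apply: (derivable_h_contract (i := SItem B) (c := items (TSeq S G D)));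
  by rewrite /items; perm_solve.
Qed.

End Contraction.

Theorem proposition6p11 (Agt : finType) (hAgt : 0 < #|Agt|) :
  forall (S : list (boxed Agt)) (Gam Del : list (form Agt)) (A : form Agt)
         (G : grp Agt) (n : nat),
    (derivable_h n (TSeq S Gam (Del ++ [A; A])) ->
     derivable_h n (TSeq S Gam (Del ++ [A]))) /\
    (derivable_h n (TSeq S (A :: A :: Gam) Del) ->
     derivable_h n (TSeq S (A :: Gam) Del)) /\
    (derivable_h n (TSeq (S ++ [(G, A); (G, A)]) Gam Del) ->
     derivable_h n (TSeq (S ++ [(G, A)]) Gam Del)).
Proof.
move=> S Gam Del A G n.
by split; [|split]; [apply: contraction_right | apply: contraction_left | apply: contraction_boxed].
Qed.
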